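(* Consider any single round of Algorithm 2 on a connected graph $G$ with nonnegative integer loads, and let $L_{max},L_{min}$ be the maximum and minimum loads at the beginning of the round. Then: (1) if node $u$ transferred load to node $v$ in this round, then at the end of the round $load(v)\le load(u)$; (2) every node whose load strictly decreases in the round ends with load strictly greater than $L_{min}$, and every node whose load strictly increases ends with load strictly less than $L_{max}$; consequently Algorithm 2 is monotonic.
   Context: $G=(V,E)$ is an undirected connected graph; each node $u$ holds an integer load $load(u)\ge 0$. Algorithm 2 (single proposal, discrete) proceeds in synchronous rounds; in each round, using the loads at the start of the round: (1) every node $u$ having at least one neighbor $v$ with $load(v)\le load(u)-2$ picks the first neighbor $v$ (in a fixed order of its neighbors) maximizing $load(u)-load(v)$ and sends $v$ a proposal of value $p_{uv}=\lfloor (load(u)-load(v))/2\rfloor$; (2) every node that received at least one proposal accepts exactly one proposal of maximum value; (3) all accepted transfers are executed simultaneously (each accepted proposal $p_{wu}$ moves $p_{wu}$ from $w$ to $u$), and nodes report their new loads to neighbors. An algorithm is monotonic if in every execution (a) each load transfer goes from a higher-loaded node to a less-loaded one, and (b) the maximum load never increases and the minimum load never decreases. *)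

From mathcomp Require Import all_boot all_order.
Set Implicit Arguments. Unset Strict Implicit. Unset Printing Implicit Defensive.

Section Alg2.
Variable V : finType.
(* nb u : the neighbours of u, listed in the fixed order used by u *)
Variable nb : V -> seq V.

Definition good_graph (adj : rel V) :=
  [/\ irreflexive adj, symmetric adj,
      (forall x y, connect adj x y) &
      (forall u, uniq (nb u) /\ forall v, (v \in nb u) = adj u v)].

Variable load : V -> nat.

Definition proposes (u : V) : bool := has (fun v => load v + 2 <= load u) (nb u).

Definition maxdiff (u : V) : nat := \max_(v <- nb u) (load u - load v).

Definition target (u : V) : V :=
  nth u (nb u) (find (fun v => load u - load v == maxdiff u) (nb u)).

Definition pval (u : V) : nat := (load u - load (target u)) %/ 2.

Definition proposes_to (w v : V) : bool := proposes w && (target w == v).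

(* acc v = Some w : v accepts w's proposal; a valid acceptance choice accepts
   exactly one proposal of maximum value whenever v received a proposal *)
Definition valid_acc (acc : V -> option V) : Prop :=
  forall v, match acc v with
            | Some w => proposes_to w v /\ forall w', proposes_to w' v -> pval w' <= pval w
            | None => forall w, ~~ proposes_to w v
            end.

Definition sent (acc : V -> option V) (u : V) : bool :=
  proposes u && (acc (target u) == Some u).

Definition new_load (acc : V -> option V) (x : V) : nat :=
  load x - (if sent acc x then pval x else 0)
  + (if acc x is Some w then pval w else 0).

End Alg2.

Definition Lmax (V : finType) (load : V -> nat) : nat := \max_(x : V) load x.
Definition Lmin (V : finType) (load : V -> nat) : nat :=
  \big[minn/Lmax load]_(x : V) load x.

(* An execution of Algorithm 2: ex n = loads at the start of round n,
   accs n = the (valid) acceptance choices of round n. *)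
Definition execution (V : finType) (nb : V -> seq V)
  (ex : nat -> V -> nat) (accs : nat -> V -> option V) : Prop :=
  forall n, valid_acc nb (ex n) (accs n) /\ ex n.+1 = new_load nb (ex n) (accs n).

Definition alg2_monotonic (V : finType) (nb : V -> seq V) : Prop :=
  forall ex accs, execution nb ex accs ->
    forall n,
      (forall u, sent nb (ex n) (accs n) u ->
                 ex n (target nb (ex n) u) < ex n u) /\
      Lmax (ex n.+1) <= Lmax (ex n) /\ Lmin (ex n) <= Lmin (ex n.+1).

From Pilot Require Import Defs.
From mathcomp Require Import all_boot all_order.
From mathcomp Require Import zify.

(* All four claims reduce to one arithmetic fact about a single
   proposal: if u proposes with gap d = load u - load (target u) >= 2, then the
   value p = floor(d/2) is positive and does not overshoot, i.e.
   load (target u) + p <= load u - p  (transfer_balanced).  Together with the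
   crude bounds  load x - (sent amount) <= new_load x <= load x + (received
   amount)  this gives:
   (1) a receiver v of u ends with at most load v + p <= load u - p, which is at
       most the final load of u;
   (2) a node whose load drops must have sent, so it keeps more than the load of
       its target, hence more than Lmin;
   (3) a node whose load rises received some p from w, so it ends below load w,
       hence below Lmax.
   Monotonicity follows: transfers go downhill by the gap bound, and (2), (3)
   bound every new load between the old extremes (Lmax_le, Lmin_ge). *)

Lemma bigmax_seq_attained {T : eqType} {s : seq T} {F : T -> nat} :
  0 < \max_(v <- s) F v -> has (fun v => F v == \max_(v <- s) F v) s.
Proof.
elim: s => [|a s IH]; first by rewrite big_nil.
rewrite big_cons /= => max_gt0.
set m := \max_(v <- s) F v in IH max_gt0 *.
(* leqP also resolves maxn (F a) m in each case *)
have [_|lt_Fa_m] := leqP m (F a); first by rewrite eqxx.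
by rewrite IH ?orbT //; lia.
Qed.

Lemma bigmin_seq_le (T : eqType) (s : seq T) (F : T -> nat) m y :
  y \in s -> \big[minn/m]_(x <- s) F x <= F y.
Proof.
elim: s => [|a s IH] //; rewrite inE big_cons => /predU1P [-> | /IH le_Fy].
  exact: geq_minl.
exact: leq_trans (geq_minr _ _) le_Fy.
Qed.

Section Extremes.
Context {V : finType}.

Lemma Lmax_ge (f : V -> nat) x : f x <= Lmax f.
Proof. exact: leq_bigmax. Qed.

Lemma Lmin_le (f : V -> nat) x : Lmin f <= f x.
Proof. by apply: bigmin_seq_le; rewrite mem_index_enum. Qed.

Lemma Lmax_le (f : V -> nat) m : (forall x, f x <= m) -> Lmax f <= m.
Proof. by move=> f_le; apply/bigmax_leqP => x _. Qed.

(* If every value of f is at least the minimum of g, so is the minimum of f;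
   on an empty type both minima are 0. *)
Lemma Lmin_ge (f g : V -> nat) : (forall x, Lmin g <= f x) -> Lmin g <= Lmin f.
Proof.
move=> f_ge; rewrite {2}/Lmin; elim/big_ind: _ => //.
- case: (pickP (@predT V)) => [x0 _ | V0].
    exact: leq_trans (f_ge x0) (Lmax_ge f x0).
  by rewrite /Lmin /Lmax !big_pred0.
- by move=> a b ha hb; rewrite leq_min ha hb.
Qed.

End Extremes.

Section OneRound.
Context {V : finType} {nb : V -> seq V} {load : V -> nat} {acc : V -> option V}.

Local Notation target := (target nb load).
Local Notation pval := (pval nb load).
Local Notation sent := (sent nb load acc).
Local Notation new_load := (new_load nb load acc).

(* A proposing node's target has load at least 2 less than its own: the gap to
   the chosen neighbour is the maximal gap, which exceeds the witnessing one. *)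
Lemma target_gap {u} : proposes nb load u -> load (target u) + 2 <= load u.
Proof.
move=> /hasP [v v_nb gap_v].
have le_maxdiff : load u - load v <= maxdiff nb load u.
  exact: (leq_bigmax_seq v).
have maxdiff_gt0 : 0 < maxdiff nb load u by lia.
have := nth_find u (bigmax_seq_attained maxdiff_gt0).
rewrite -/(maxdiff nb load u) -/(target u) => /eqP; lia.
Qed.

Lemma transfer_balanced {u} :
  proposes nb load u -> 0 < pval u /\ load (target u) + pval u <= load u - pval u.
Proof. by move/target_gap; rewrite /Defs.pval; lia. Qed.

Lemma new_load_lower x : load x - (if sent x then pval x else 0) <= new_load x.
Proof. exact: leq_addr. Qed.

Lemma new_load_upper x :
  new_load x <= load x + (if acc x is Some w then pval w else 0).
Proof. by rewrite /Defs.new_load; lia. Qed.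

Lemma sent_accepted {u} : sent u -> proposes nb load u /\ acc (target u) = Some u.
Proof. by move=> /andP [prop_u /eqP acc_t]. Qed.

Lemma accepted_target (hacc : valid_acc nb load acc) {v w} :
  acc v = Some w -> proposes nb load w /\ target w = v.
Proof. by move=> acc_v; have := hacc v; rewrite acc_v => -[/andP [? /eqP]]. Qed.

Lemma receiver_le_sender u :
  sent u -> new_load (target u) <= new_load u.
Proof.
move=> sent_u; have [prop_u acc_t] := sent_accepted sent_u.
have [_ balanced] := transfer_balanced prop_u.
have := new_load_upper (target u); have := new_load_lower u.
by rewrite acc_t sent_u; lia.
Qed.

Lemma decreasing_above_min x : new_load x < load x -> Lmin load < new_load x.
Proof.
move=> drop; have := new_load_lower x.
case sent_x: (sent x); last by lia.
have [prop_x _] := sent_accepted sent_x.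
have [pos balanced] := transfer_balanced prop_x.
have := Lmin_le load (target x); lia.
Qed.

Lemma increasing_below_max (hacc : valid_acc nb load acc) x :
  load x < new_load x -> new_load x < Lmax load.
Proof.
move=> rise; have := new_load_upper x.
case acc_x: (acc x) => [w|]; last by lia.
have [prop_w target_w] := accepted_target hacc acc_x.
have [pos balanced] := transfer_balanced prop_w.
have := Lmax_ge load w; rewrite target_w in balanced; lia.
Qed.

Lemma round_extremes (hacc : valid_acc nb load acc) :
  Lmax new_load <= Lmax load /\ Lmin load <= Lmin new_load.
Proof.
split.
- apply: Lmax_le => x; have [rise|no_rise] := ltnP (load x) (new_load x).
    exact: ltnW (increasing_below_max hacc x rise).
  exact: leq_trans no_rise (Lmax_ge load x).
- apply: Lmin_ge => x; have [drop|no_drop] := ltnP (new_load x) (load x).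
    exact: ltnW (decreasing_above_min x drop).
  exact: leq_trans (Lmin_le load x) no_drop.
Qed.

End OneRound.

Theorem lemma6 (V : finType) (adj : rel V) (nb : V -> seq V)
  (hG : good_graph nb adj) (load : V -> nat) (acc : V -> option V)
  (hacc : valid_acc nb load acc) :
  (forall u v, sent nb load acc u -> target nb load u = v ->
     new_load nb load acc v <= new_load nb load acc u) /\
  (forall x, new_load nb load acc x < load x -> Lmin load < new_load nb load acc x) /\
  (forall x, load x < new_load nb load acc x -> new_load nb load acc x < Lmax load) /\
  alg2_monotonic nb.
Proof.
split; first by move=> u v sent_u <-; exact: receiver_le_sender.
split; first exact: decreasing_above_min.
split; first exact: increasing_below_max hacc.
move=> ex accs exec n; have [valid_n ->] := exec n.
split; last exact: round_extremes valid_n.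
move=> u /sent_accepted [prop_u _]; have := target_gap prop_u; lia.
Qed.
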